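(* Let $X_1,X_2,\dots$ be iid random variables satisfying condition $(\mathrm{P})$ with constant $a>0$, and $S_k=X_1+\dots+X_k$. Then for each $\epsilon>0$ there is $B>0$ such that for all $k\ge3$ and $u>0$, $$P(S_k>u+a)\le\epsilon P(S_k>u)+\frac{P(S_{k-1}>u)}{P(X_1>B)}.$$
   Context: A random variable $Y$ satisfies condition $(\mathrm{P})$ with constant $a>0$ if $P(Y>u)>0$ for all $u>0$ and $\lim_{u\to\infty}P(Y>u+a)/P(Y>u)=0$. *)

From HB Require Import structures.
From mathcomp Require Import all_boot all_order all_algebra.
From mathcomp Require Import all_classical all_reals all_analysis.
Set Implicit Arguments. Unset Strict Implicit. Unset Printing Implicit Defensive.
Import Order.TTheory GRing.Theory Num.Theory.
Import numFieldNormedType.Exports.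
Local Open Scope classical_set_scope.
Local Open Scope ring_scope.

Definition tailP d (T : measurableType d) (R : realType) (P : probability T R)
  (Y : T -> R) (u : R) : R := fine (P [set w | u < Y w]).

Definition condition_P d (T : measurableType d) (R : realType)
  (P : probability T R) (Y : T -> R) (a : R) : Prop :=
  0 < a /\
  (forall u : R, 0 < u -> (0%E < P [set w | (u < Y w)%R])%E) /\
  ((fun u : R => tailP P Y (u + a) / tailP P Y u) @ +oo --> (0 : R)).

Definition mutually_independent d (T : measurableType d) (R : realType)
  (P : probability T R) (X : nat -> {RV P >-> R}) : Prop :=
  forall (J : seq nat) (B : nat -> set R),
    uniq J -> (forall i, measurable (B i)) ->
    P (\bigcap_(i in [set i | i \in J]) (X i @^-1` B i)) =
    (\prod_(i <- J) P (X i @^-1` B i))%E.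

Definition identically_distributed d (T : measurableType d) (R : realType)
  (P : probability T R) (X : nat -> {RV P >-> R}) : Prop :=
  forall n, distribution P (X n) = distribution P (X 0%N).

Definition iid d (T : measurableType d) (R : realType)
  (P : probability T R) (X : nat -> {RV P >-> R}) : Prop :=
  mutually_independent X /\ identically_distributed X.

(* partial sums: S k = X_1 + ... + X_k, where X_1 is X 0 (0-indexed) *)
Definition partial_sum d (T : measurableType d) (R : realType)
  (P : probability T R) (X : nat -> {RV P >-> R}) (k : nat) : T -> R :=
  fun w => \sum_(i < k) X i w.

(* Write S_k = W + V with W = S_(k-2) and V = X_(k-1) + X_k, two independent
   variables.  With e = eps / 3, condition (P) passes from X_1 to V with constant 3e
   beyond some B = B0 + B1: if V > v + a, then either one summand is at most v - B0,
   and the ratio bound of the other summand beyond B0 gives a factor e, or both exceed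
   v - B0, which has probability at most P(X_1 > v - B0) e P(X_1 > B0) <= e P(V > v)
   once v - B0 >= B1.  Then
     P(S_k > u + a) <= P(W <= u - B, S_k > u + a) + P(W > u - B),
   where the first term is at most eps P(S_k > u) (slice W into thin strips and use the
   ratio bound for V on each), and P(W > u - B) P(X_1 > B) <= P(S_(k-1) > u) by
   independence of W and X_(k-1). *)

From HB Require Import structures.
From mathcomp Require Import all_boot all_order all_algebra.
From mathcomp Require Import all_classical all_reals all_analysis.
From mathcomp Require Import lra ring.
Import Order.TTheory GRing.Theory Num.Theory.
Local Open Scope classical_set_scope.
Local Open Scope ring_scope.
Set Implicit Arguments. Unset Strict Implicit. Unset Printing Implicit Defensive.

Section independence.
Context d (T : measurableType d) (R : realType) (P : probability T R).
Local Open Scope ereal_scope.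

Lemma probability_fineK (A : set T) : measurable A -> (fine (P A))%:E = P A.
Proof. by move=> mA; rewrite fineK// fin_num_measure. Qed.

Definition indep_with (F : set T) :=
  [set E | measurable E /\ P (E `&` F) = P E * P F].

Lemma lambda_system_indep_with F : measurable F -> lambda_system setT (indep_with F).
Proof.
move=> mF; have finP (A : set T) : measurable A -> P A < +oo.
  by move=> mA; exact: le_lt_trans (probability_le1 P mA) (ltry _).
split => //.
- by split => //; rewrite setTI probability_setT mul1e.
- move=> A B BA [mA PAF] [mB PBF]; split; first exact: measurableD.
  have mAF := measurableI _ _ mA mF; have mBF := measurableI _ _ mB mF.
  have BFA : B `&` F `<=` A `&` F by move=> x [Bx Fx]; split => //; exact: BA.
  have -> : (A `\` B) `&` F = (A `&` F) `\` (B `&` F).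
    apply/seteqP; split => x /=; first by move=> [[? ?] ?]; split => // -[].
    by move=> [[Ax Fx] BFx]; split => //; split => // Bx; exact: BFx.
  rewrite !measureD // ?finP // (setIidr BFA) (setIidr BA).
  change (P (A `&` F) - P (B `&` F) = (P A - P B) * P F).
  rewrite PAF PBF -(probability_fineK mA) -(probability_fineK mB).
  by rewrite -(probability_fineK mF) -!EFinM -!EFinB mulrBl.
- move=> G ndG IG; have mG n : measurable (G n) by case: (IG n).
  have mUG : measurable (\bigcup_n G n) by exact: bigcup_measurable.
  split => //.
  have ndGF : nondecreasing_seq (fun n => G n `&` F).
    by move=> m n mn; apply/subsetPset; apply: setSI; apply/subsetPset/ndG.
  have := nondecreasing_cvg_mu (mu := P) (fun n => measurableI _ _ (mG n) mF)
    (bigcup_measurable (fun n _ => measurableI _ _ (mG n) mF)) ndGF.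
  rewrite -setI_bigcupl (_ : P \o _ = fun n => P (G n) * P F); last first.
    by apply/funext => n /=; case: (IG n).
  move=> cvgGF; have cvgGP : (fun n => P (G n) * P F) @ \oo --> P (\bigcup_n G n) * P F.
    apply: cvgeM; [|exact: nondecreasing_cvg_mu|exact: cvg_cst].
    by apply: mule_def_fin; exact: fin_num_measure.
  exact: (cvg_unique _ cvgGF cvgGP).
Qed.

Variable X : nat -> {RV P >-> R}.

Definition cylinder (s : seq nat) : set (set T) :=
  [set E | exists B : nat -> set R, (forall i, measurable (B i)) /\
     E = \bigcap_(i in [set i | i \in s]) (X i @^-1` B i)].

Lemma cylinder_setI_closed s : setI_closed (cylinder s).
Proof.
move=> _ _ [B [mB ->]] [B' [mB' ->]].
exists (fun i => B i `&` B' i); split; first by move=> i; exact: measurableI.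
apply/seteqP; split => x /=; first by move=> [H1 H2] i si; split; [exact: H1|exact: H2].
by move=> H; split => i si; have [] := H i si.
Qed.

Lemma cylinder_measurable s E : cylinder s E -> measurable E.
Proof.
move=> [B [mB ->]]; apply: bigcap_measurableType => i _.
exact: measurable_funPTI.
Qed.

Lemma sigma_cylinder_measurable s E : <<s cylinder s >> E -> measurable E.
Proof.
move=> sE; apply: (smallest_sub _ _ sE); last exact: cylinder_measurable.
split; [exact: measurable0 | by move=> A mA; rewrite setTD; exact: measurableC
  | by move=> F mF; exact: bigcup_measurable].
Qed.

Lemma cylinder_indep s1 s2 E F : mutually_independent X -> uniq (s1 ++ s2) ->
  cylinder s1 E -> cylinder s2 F -> P (E `&` F) = P E * P F.
Proof.
move=> indX u12 [B [mB ->]] [B' [mB' ->]].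
move: (u12); rewrite cat_uniq => /and3P[u1 /hasPn s21 u2].
have s2N1 i : i \in s2 -> i \notin s1 by move=> /s21.
pose C i := if i \in s1 then B i else B' i.
have mC i : measurable (C i) by rewrite /C; case: ifP.
have CE (A : nat -> set R) (s : seq nat) : (forall i, i \in s -> C i = A i) ->
    \bigcap_(i in [set i | i \in s]) (X i @^-1` C i) =
    \bigcap_(i in [set i | i \in s]) (X i @^-1` A i).
  by move=> CA; apply: eq_bigcapr => i /CA ->.
have C1 i : i \in s1 -> C i = B i by rewrite /C => ->.
have C2 i : i \in s2 -> C i = B' i by move=> /s2N1 /negbTE; rewrite /C => ->.
rewrite -(CE B s1 C1) -(CE B' s2 C2) !indX //.
rewrite (_ : _ `&` _ = \bigcap_(i in [set i | i \in s1 ++ s2]) (X i @^-1` C i)).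
  by rewrite indX // big_cat.
apply/seteqP; split => x /=.
  by move=> [H1 H2] i /= /[!mem_cat] /orP[/H1|/H2].
by move=> H; split => i si; apply: H; rewrite /= mem_cat si ?orbT.
Qed.

Lemma sigma_cylinder_indep s1 s2 E F : mutually_independent X -> uniq (s1 ++ s2) ->
  <<s cylinder s1 >> E -> <<s cylinder s2 >> F -> P (E `&` F) = P E * P F.
Proof.
(* Dynkin's pi-lambda theorem, once in each argument. *)
move=> indX u12 sE sF.
have pi_lambda (s : seq nat) (G : set T) : measurable G -> cylinder s `<=` indep_with G ->
    <<s cylinder s >> `<=` indep_with G.
  move=> mG sub; apply: (lambda_system_subset (@cylinder_setI_closed s)
    (lambda_system_indep_with mG) sub).
  by move=> A _; exact: subsetT.
have indep_cylinder2 G : cylinder s2 G -> <<s cylinder s1 >> `<=` indep_with G.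
  move=> cG; apply: pi_lambda (cylinder_measurable cG) _ => E' cE'.
  by split; [exact: cylinder_measurable cE'|exact: cylinder_indep cE' cG].
have : <<s cylinder s2 >> `<=` indep_with E.
  apply: pi_lambda (sigma_cylinder_measurable sE) _ => G cG.
  split; first exact: cylinder_measurable cG.
  have [_ PEG] := indep_cylinder2 G cG E sE.
  by rewrite setIC muleC; exact: PEG.
move=> /(_ F sF) [_ PFE].
by rewrite setIC muleC; exact: PFE.
Qed.

Lemma measurable_cylinder_coord s i : i \in s ->
  measurable_fun (setT : set (g_sigma_algebraType (cylinder s))) (X i : T -> R).
Proof.
move=> si _ Y mY; apply: sub_sigma_algebra.
exists (fun j => if j == i then Y else setT); split; first by move=> j; case: ifP.
apply/seteqP; split => x /=; first by move=> [_ Yx] j _; case: eqP => [->|].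
by move=> H; split => //; have := H i si; rewrite eqxx.
Qed.

Lemma measurable_cylinder_sum s t : {subset t <= s} ->
  measurable_fun (setT : set (g_sigma_algebraType (cylinder s)))
    (fun w => \sum_(i <- t) X i w)%R.
Proof.
elim: t => [_|i t IHt ts].
  by under eq_fun do rewrite big_nil; exact: measurable_cst.
under eq_fun do rewrite big_cons.
apply: measurable_realfun.measurable_funD.
  by apply: measurable_cylinder_coord; apply: ts; rewrite inE eqxx.
by apply: IHt => j jt; apply: ts; rewrite inE jt orbT.
Qed.

End independence.

Definition indep_rv d (T : measurableType d) (R : realType) (P : probability T R)
    (Y Z : T -> R) :=
  forall A C, measurable A -> measurable C ->
    P (Y @^-1` A `&` Z @^-1` C) = (P (Y @^-1` A) * P (Z @^-1` C))%E.

Lemma indep_rv_sum d (T : measurableType d) (R : realType) (P : probability T R)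
    (X : nat -> {RV P >-> R}) s1 s2 :
  mutually_independent X -> uniq (s1 ++ s2) ->
  indep_rv P (fun w => \sum_(i <- s1) X i w) (fun w => \sum_(i <- s2) X i w).
Proof.
move=> indX u12 A C mA mC.
apply: (sigma_cylinder_indep indX u12); rewrite -[X in <<s _ >> X]setTI.
  exact: (measurable_cylinder_sum (t := s1) (fun i => id)).
exact: (measurable_cylinder_sum (t := s2) (fun i => id)).
Qed.

Lemma indep_rv_sym d (T : measurableType d) (R : realType) (P : probability T R)
    (Y Z : T -> R) :
  indep_rv P Y Z -> indep_rv P Z Y.
Proof. by move=> YZ A C mA mC; rewrite setIC muleC; exact: YZ. Qed.

Section tails.
Context d (T : measurableType d) (R : realType) (P : probability T R).
Local Open Scope ereal_scope.

Lemma gt_setE (Z : T -> R) (v : R) :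
  [set w | (v < Z w)%R] = Z @^-1` `]v, +oo[%classic.
Proof. by apply/seteqP; split => w /=; rewrite in_itv /= andbT. Qed.

Lemma measurable_gt_set (Z : T -> R) (v : R) : measurable_fun setT Z ->
  measurable [set w | (v < Z w)%R].
Proof.
move=> mZ; rewrite gt_setE -[X in measurable X]setTI.
by apply: mZ => //; exact: measurable_itv.
Qed.

Lemma measurable_le_set (Y : T -> R) (v : R) : measurable_fun setT Y ->
  measurable [set w | (Y w <= v)%R].
Proof.
move=> mY; rewrite (_ : [set w | _] = Y @^-1` `]-oo, v]%classic); last first.
  by apply/seteqP; split => w /=; rewrite in_itv.
rewrite -[X in measurable X]setTI.
by apply: mY => //; exact: measurable_itv.
Qed.

Lemma le_probability (A B : set T) : measurable A -> measurable B -> A `<=` B ->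
  P A <= P B.
Proof. by move=> mA mB AB; apply: le_measure => //; rewrite inE. Qed.

Lemma le_measure_gt_of_gt (A : set T) (f : T -> R) (t : R) (r : \bar R) :
  measurable A -> measurable_fun setT f ->
  (forall t', (t < t')%R -> P (A `&` [set w | (t' < f w)%R]) <= r) ->
  P (A `&` [set w | (t < f w)%R]) <= r.
Proof.
move=> mA mf Hr.
pose F n := A `&` [set w | (t + n.+1%:R^-1 < f w)%R].
have mF n : measurable (F n) by apply: measurableI => //; exact: measurable_gt_set.
have ndF : nondecreasing_seq F.
  move=> m n mn; apply/subsetPset => w [Aw /= h]; split => //=.
  by apply: le_lt_trans h; rewrite lerD2l lef_pV2 ?posrE// ler_nat ltnS.
have UF : \bigcup_n F n = A `&` [set w | (t < f w)%R].
  apply/seteqP; split => w.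
    by move=> [n _ [Aw /= h]]; split => //=; apply: lt_trans h; rewrite ltrDl.
  by move=> [Aw /= /ltr_add_invr[k hk]]; exists k.
rewrite -UF; apply: (cvge_to_le (nondecreasing_cvg_mu mF _ ndF)).
  exact: bigcup_measurable.
by apply: nearW => n /=; apply: Hr; rewrite ltrDl.
Qed.

Definition tail_ratio_le (Z : T -> R) (e a B : R) : Prop :=
  forall v, (B <= v)%R -> P [set w | (v + a < Z w)%R] <= e%:E * P [set w | (v < Z w)%R].

End tails.

Section strips.
Context (T : Type) (R : realType) (Y : T -> R) (x delta : R).

Definition strip (j : nat) : set T :=
  Y @^-1` `](x - j.+1%:R * delta), (x - j%:R * delta)]%classic.

Lemma strip_cover : 0 < delta -> [set w | Y w <= x] `<=` \bigcup_j strip j.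
Proof.
move=> delta_gt0 w /= Ywx.
have : 0 <= (x - Y w) / delta by rewrite divr_ge0 // ?subr_ge0 // ltW.
move=> /truncn_itv /andP[jle jgt].
exists (Num.truncn ((x - Y w) / delta)) => //; rewrite /strip /= in_itv /=.
rewrite ler_pdivlMr // in jle; rewrite ltr_pdivrMr // in jgt.
by apply/andP; split; lra.
Qed.

Lemma strip_trivIset : 0 <= delta -> trivIset setT strip.
Proof.
move=> delta_ge0.
have gap (i j : nat) : (i < j)%N -> x - j%:R * delta <= x - i.+1%:R * delta.
  by move=> ij; rewrite lerD2l lerN2 ler_wpM2r // ler_nat.
move=> i j _ _ [w []]; rewrite /strip /= !in_itv /= => /andP[hi1 hi2] /andP[hj1 hj2].
by case: (ltngtP i j) => // /gap ?; exfalso; lra.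
Qed.

End strips.

Section small_left_summand.
Context d (T : measurableType d) (R : realType) (P : probability T R).
Local Open Scope ereal_scope.
Variables (Y Z : T -> R) (a e B u : R).
Hypotheses (mY : measurable_fun setT Y) (mZ : measurable_fun setT Z).
Hypotheses (indYZ : indep_rv P Y Z) (e_ge0 : (0 <= e)%R).
Hypothesis ratioZ : tail_ratio_le P Z e a B.

Local Notation sum_gt t := [set w | (t < Y w + Z w)%R].

Let measurable_sum_gt t : measurable (sum_gt t).
Proof. exact/measurable_gt_set/measurable_realfun.measurable_funD. Qed.

Section shifted.
Variable u' : R.
Hypothesis uu' : (u < u')%R.

Local Notation s := (strip Y (u - B) (u' - u)).

Let measurable_strip j : measurable (s j).
Proof. by rewrite -[X in measurable X]setTI; apply: mY => //; exact: measurable_itv. Qed.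

Lemma strip_tail_le j :
  P (s j `&` sum_gt (u' + a)) <= e%:E * P (s j `&` sum_gt u).
Proof.
(* On the j-th strip u - z < Y <= u' - z, so Y + Z > u' + a forces Z > z + a,
   and Z > z forces Y + Z > u. *)
pose z := (B + j.+1%:R * (u' - u))%R.
have z_geB : (B <= z)%R.
  by rewrite lerDl mulr_ge0 // subr_ge0 ltW.
have z_small : s j `&` sum_gt (u' + a) `<=` s j `&` Z @^-1` `](z + a)%R, +oo[%classic.
  move=> w [sw hw]; split => //; move: sw hw; rewrite /strip /z /=.
  rewrite !in_itv /= andbT mulrSr => /andP[h1 h2] h3; lra.
have z_large : s j `&` Z @^-1` `]z, +oo[%classic `<=` s j `&` sum_gt u.
  move=> w [sw hw]; split => //; move: sw hw; rewrite /strip /z /=.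
  rewrite !in_itv /= andbT => /andP[h1 h2] h3; lra.
have mZgt t : measurable (Z @^-1` `]t, +oo[%classic).
  by rewrite -gt_setE; exact: measurable_gt_set.
apply: le_trans (le_probability _ _ _ z_small) _; try exact: measurableI.
rewrite indYZ; [|exact: measurable_itv|exact: measurable_itv].
apply: le_trans (lee_wpmul2l (measure_ge0 P _) _) _; first by rewrite -!gt_setE; exact: ratioZ.
rewrite muleCA gt_setE -indYZ; [|exact: measurable_itv|exact: measurable_itv].
apply: lee_wpmul2l; first by rewrite lee_fin.
by apply: le_probability z_large; exact: measurableI.
Qed.

Lemma tail_add_small_left_shift :
  P ([set w | (Y w <= u - B)%R] `&` sum_gt (u' + a)) <= e%:E * P (sum_gt u).
Proof.
have delta_gt0 : (0 < u' - u)%R by rewrite subr_gt0.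
have mL : measurable ([set w | (Y w <= u - B)%R] `&` sum_gt (u' + a)).
  by apply: measurableI; [exact: measurable_le_set|exact: measurable_sum_gt].
have cover : [set w | (Y w <= u - B)%R] `&` sum_gt (u' + a) `<=`
    \bigcup_j (s j `&` sum_gt (u' + a)).
  by move=> w [/(@strip_cover _ _ Y (u - B) _ delta_gt0) [j _ sjw] hw]; exists j.
apply: le_trans (measure_sigma_subadditive P (fun j => measurableI _ _ (measurable_strip j)
  (measurable_sum_gt _)) mL cover) _.
apply: le_trans.
  apply: (@lee_nneseries _ _ (fun j => e%:E * P (s j `&` sum_gt u))) => [j _ _|j _].
    exact: measure_ge0.
  exact: strip_tail_le.
rewrite nneseriesZl; last by move=> j _; exact: measure_ge0.
apply: lee_wpmul2l; first by rewrite lee_fin.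
have mS j : measurable (s j `&` sum_gt u) by exact: measurableI.
have mUS : measurable (\bigcup_j (s j `&` sum_gt u)) by exact: bigcup_measurable.
rewrite -measure_semi_bigcup //; last exact/trivIset_setIr/strip_trivIset/ltW.
by apply: le_probability => // w [j _ []].
Qed.

End shifted.

(* The strips cost the shift u' - u, recovered by continuity of P from below. *)
Lemma tail_add_small_left :
  P ([set w | (Y w <= u - B)%R] `&` sum_gt (u + a)) <= e%:E * P (sum_gt u).
Proof.
apply: (le_measure_gt_of_gt (f := fun w => Y w + Z w)%R).
- exact: measurable_le_set.
- exact: measurable_realfun.measurable_funD.
move=> t ut; rewrite -(subrK a t).
by apply: tail_add_small_left_shift; rewrite ltrBrDr.
Qed.

End small_left_summand.

Section sum_tails.
Context d (T : measurableType d) (R : realType) (P : probability T R).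
Local Open Scope ereal_scope.
Variables (Y Z : T -> R).
Hypotheses (mY : measurable_fun setT Y) (mZ : measurable_fun setT Z).
Hypothesis indYZ : indep_rv P Y Z.

Let measurable_sum_gt (t : R) : measurable [set w | (t < Y w + Z w)%R].
Proof. exact/measurable_gt_set/measurable_realfun.measurable_funD. Qed.

Lemma tail_ratio_le_add (a e B0 B : R) : (0 <= e)%R ->
  tail_ratio_le P Y e a B0 -> tail_ratio_le P Z e a B0 ->
  (forall v, (B <= v)%R ->
    P [set w | (v - B0 < Z w)%R] <= e%:E * P [set w | (B0 < Z w)%R]) ->
  tail_ratio_le P (fun w => Y w + Z w)%R (3 * e) a B.
Proof.
move=> e_ge0 ratioY ratioZ tailZ v vB.
pose R1 := [set w | (Y w <= v - B0)%R] `&` [set w | (v + a < Y w + Z w)%R].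
pose R2 := [set w | (Z w <= v - B0)%R] `&` [set w | (v + a < Z w + Y w)%R].
pose R3 := [set w | (v - B0 < Y w)%R] `&` [set w | (v - B0 < Z w)%R].
have mR1 : measurable R1.
  by apply: measurableI; [exact: measurable_le_set|exact: measurable_sum_gt].
have mR2 : measurable R2.
  apply: measurableI; first exact: measurable_le_set.
  exact/measurable_gt_set/measurable_realfun.measurable_funD.
have mR3 : measurable R3 by apply: measurableI; exact: measurable_gt_set.
have cover : [set w | (v + a < Y w + Z w)%R] `<=` R1 `|` R2 `|` R3.
  move=> w /= h; case: (leP (Y w) (v - B0)%R) => hY; first by left; left.
  case: (leP (Z w) (v - B0)%R) => hZ; last by right.
  by left; right; split => //=; rewrite [(Z w + _)%R]addrC.
have le1 : P R1 <= e%:E * P [set w | (v < Y w + Z w)%R].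
  exact: tail_add_small_left.
have le2 : P R2 <= e%:E * P [set w | (v < Y w + Z w)%R].
  rewrite (_ : [set w | (v < Y w + Z w)%R] = [set w | (v < Z w + Y w)%R]); last first.
    by apply/seteqP; split => w /=; rewrite addrC.
  exact: tail_add_small_left (indep_rv_sym indYZ) _ ratioY.
have le3 : P R3 <= e%:E * P [set w | (v < Y w + Z w)%R].
  rewrite /R3 !gt_setE indYZ; [|exact: measurable_itv|exact: measurable_itv].
  apply: le_trans (lee_wpmul2l (measure_ge0 P _) _) _.
    by rewrite -gt_setE; apply: tailZ.
  rewrite muleCA gt_setE -indYZ; [|exact: measurable_itv|exact: measurable_itv].
  apply: lee_wpmul2l; first by rewrite lee_fin.
  rewrite -(gt_setE (fun w => Y w + Z w)%R).
  apply: le_probability; [|exact: measurable_sum_gt|].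
    by apply: measurableI; rewrite -gt_setE; exact: measurable_gt_set.
  by move=> w [/=]; rewrite !in_itv /= !andbT => h1 h2; lra.
have mR12 := measurableU _ _ mR1 mR2.
apply: (le_trans (le_probability P (measurable_sum_gt _) (measurableU _ _ mR12 mR3) cover)).
apply: (le_trans (measureU2 _ mR12 mR3)).
apply: (le_trans (leeD (measureU2 _ mR1 mR2) (lexx _))).
rewrite (_ : (3 * e)%R = e + e + e)%R; last by ring.
by rewrite !EFinD !ge0_muleDl ?adde_ge0 ?lee_fin //; apply: leeD; first apply: leeD.
Qed.

End sum_tails.

Section split_tail.
Context d (T : measurableType d) (R : realType) (P : probability T R).
Variables (W V U : T -> R).
Hypotheses (mW : measurable_fun setT W) (mV : measurable_fun setT V).
Hypothesis mU : measurable_fun setT U.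
Hypotheses (indWV : indep_rv P W V) (indWU : indep_rv P W U).

Lemma tail_add_le (a e B u : R) : 0 <= e -> tail_ratio_le P V e a B ->
  0 < tailP P U B ->
  tailP P (fun w => W w + V w) (u + a) <=
    e * tailP P (fun w => W w + V w) u + tailP P (fun w => W w + U w) u / tailP P U B.
Proof.
move=> e_ge0 ratioV tailU_gt0.
have mWV := measurable_realfun.measurable_funD mW mV.
have mWU := measurable_realfun.measurable_funD mW mU.
pose L := [set w | W w <= u - B] `&` [set w | u + a < W w + V w].
pose Q := [set w | u - B < W w].
have mL : measurable L.
  by apply: measurableI; [exact: measurable_le_set|exact: measurable_gt_set].
have mQ : measurable Q by exact: measurable_gt_set.
have PWV : (P [set w | (u + a < W w + V w)%R] <= P L + P Q)%E.
  apply: le_trans (measureU2 _ mL mQ).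
  apply: (le_probability P (measurable_gt_set _ mWV) (measurableU _ _ mL mQ)) => w /= h.
  by case: (leP (W w) (u - B)) => hW; [left|right].
have PL : (P L <= e%:E * P [set w | (u < W w + V w)%R])%E by exact: tail_add_small_left.
have PQ : (P Q * P [set w | (B < U w)%R] <= P [set w | (u < W w + U w)%R])%E.
  rewrite /Q !gt_setE -indWU; [|exact: measurable_itv|exact: measurable_itv].
  rewrite -(gt_setE (fun w => W w + U w)).
  apply: le_probability; [|exact: measurable_gt_set|].
    by apply: measurableI; rewrite -gt_setE; exact: measurable_gt_set.
  by move=> w [/=]; rewrite !in_itv /= !andbT => hW hU; lra.
have [mWVua mWVu] := (measurable_gt_set (u + a) mWV, measurable_gt_set u mWV).
have [mWUu mUB] := (measurable_gt_set u mWU, measurable_gt_set B mU).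
rewrite -(probability_fineK P mWVua) -(probability_fineK P mL) in PWV.
rewrite -(probability_fineK P mQ) -EFinD lee_fin in PWV.
rewrite -(probability_fineK P mL) -(probability_fineK P mWVu) -EFinM lee_fin in PL.
rewrite -(probability_fineK P mQ) -(probability_fineK P mUB) in PQ.
rewrite -(probability_fineK P mWUu) -EFinM lee_fin in PQ.
rewrite /tailP; apply: le_trans PWV _; apply: lerD => //.
by rewrite ler_pdivlMr.
Qed.

End split_tail.

Lemma near_pinfty_ex_gt0 (R : realType) (Q : R -> Prop) :
  (\forall v \near +oo, Q v) -> exists B, 0 < B /\ forall v, B <= v -> Q v.
Proof.
move=> [M [_ MQ]]; have : M <= Num.max M 0 /\ 0 <= Num.max M 0.
  by split; rewrite le_max lexx ?orbT.
move: (Num.max M 0) => m [Mm m_ge0]; exists (m + 1); split => [|v vm]; first lra.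
by apply: MQ; lra.
Qed.

Section tail_limits.
Context d (T : measurableType d) (R : realType) (P : probability T R).
Variable Y : {RV P >-> R}.

Let measurable_gt (t : R) : measurable [set w | t < Y w].
Proof. exact/measurable_gt_set/measurable_funP. Qed.

Lemma tailP_gt0 (t : R) : (0 < P [set w | (t < Y w)%R])%E -> 0 < tailP P Y t.
Proof.
move=> tail_gt0; apply: fine_gt0.
by rewrite tail_gt0 (le_lt_trans (probability_le1 P _) (ltry _)).
Qed.

Lemma condition_P_tail_ratio (a e : R) : condition_P P Y a -> 0 < e ->
  exists B, 0 < B /\ tail_ratio_le P Y e a B.
Proof.
move=> [_ [tail_gt0 /cvgrPdist_lt lim]] e_gt0.
have [B [B_gt0 HB]] := near_pinfty_ex_gt0 (lim e e_gt0).
exists B; split => // v vB; have v_gt0 : 0 < v by lra.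
have := HB v vB; rewrite sub0r normrN /tailP => /(le_lt_trans (ler_norm _)).
rewrite ltr_pdivrMr; last exact/tailP_gt0/tail_gt0.
move=> /ltW.
by rewrite -lee_fin EFinM !probability_fineK.
Qed.

Lemma tail_vanishing (c : R) : 0 < c ->
  exists B, 0 < B /\ forall v, B <= v -> (P [set w | (v < Y w)%R] <= c%:E)%E.
Proof.
move=> c_gt0; have /fine_cvgP[_ /cvgrPdist_lt lim] := cvg_ccdfy0 Y.
have [B [B_gt0 HB]] := near_pinfty_ex_gt0 (lim c c_gt0).
exists B; split => // v vB; have := HB v vB; rewrite sub0r normrN /ccdf /=.
move=> /(le_lt_trans (ler_norm _)) /ltW tail_le.
by rewrite -(probability_fineK P (measurable_gt v)) lee_fin gt_setE.
Qed.

End tail_limits.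

Section iid_partial_sums.
Context d (T : measurableType d) (R : realType) (P : probability T R).
Variable X : nat -> {RV P >-> R}.
Hypotheses (indX : mutually_independent X) (idX : identically_distributed X).

Lemma tail_iid n (t : R) : P [set w | t < X n w] = P [set w | t < X 0%N w].
Proof.
rewrite !gt_setE.
by have := congr1 (fun mu : set R -> \bar R => mu `]t, +oo[%classic) (idX n).
Qed.

Lemma tailP_iid n (t : R) : tailP P (X n) t = tailP P (X 0%N) t.
Proof. by rewrite /tailP tail_iid. Qed.

Lemma tail_ratio_iid n (e a B : R) :
  tail_ratio_le P (X 0%N) e a B -> tail_ratio_le P (X n) e a B.
Proof. by move=> ratioX v vB; rewrite !tail_iid; exact: ratioX. Qed.

Lemma partial_sumE k : partial_sum X k = fun w => \sum_(i <- iota 0 k) X i w.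
Proof.
apply/funext => w.
by rewrite /partial_sum -(big_mkord xpredT (fun i => X i w)) /index_iota subn0.
Qed.

Lemma partial_sumS k : partial_sum X k.+1 = fun w => partial_sum X k w + X k w.
Proof. by apply/funext => w; rewrite /partial_sum big_ord_recr. Qed.

Lemma partial_sumSS k :
  partial_sum X k.+2 = fun w => partial_sum X k w + (X k w + X k.+1 w).
Proof. by rewrite !partial_sumS; apply/funext => w; rewrite addrA. Qed.

Lemma measurable_partial_sum k : measurable_fun setT (partial_sum X k).
Proof. by apply: measurable_sum => i; exact: measurable_funP. Qed.

Let sum1E i : (fun w => \sum_(j <- [:: i]) X j w) = X i.
Proof. by apply/funext => w; rewrite big_seq1. Qed.

Let sum2E i : (fun w => \sum_(j <- [:: i; i.+1]) X j w) = fun w => X i w + X i.+1 w.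
Proof. by apply/funext => w; rewrite !big_cons big_nil addr0. Qed.

Lemma indep_partial_sum_next k : indep_rv P (partial_sum X k) (X k).
Proof.
rewrite partial_sumE -sum1E; apply: indep_rv_sum => //.
by rewrite (_ : [:: k] = iota k 1) // -iotaD iota_uniq.
Qed.

Lemma indep_partial_sum_pair k :
  indep_rv P (partial_sum X k) (fun w => X k w + X k.+1 w).
Proof.
rewrite partial_sumE -sum2E; apply: indep_rv_sum => //.
by rewrite (_ : [:: k; k.+1] = iota k 2) // -iotaD iota_uniq.
Qed.

Lemma tail_ratio_pair k (a e B0 B : R) : 0 <= e ->
  tail_ratio_le P (X 0%N) e a B0 ->
  (forall v, B <= v ->
    (P [set w | (v - B0 < X 0%N w)%R] <= e%:E * P [set w | (B0 < X 0%N w)%R])%E) ->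
  tail_ratio_le P (fun w => X k w + X k.+1 w) (3 * e) a B.
Proof.
move=> e_ge0 ratioX tailX.
have indXX : indep_rv P (X k) (X k.+1).
  by rewrite -sum1E -(sum1E k.+1); apply: indep_rv_sum; rewrite //= inE ltn_eqF.
apply: (tail_ratio_le_add (measurable_funP (X k)) (measurable_funP (X k.+1)) indXX e_ge0
  (tail_ratio_iid k ratioX) (tail_ratio_iid k.+1 ratioX)).
by move=> v vB; rewrite !tail_iid; exact: tailX.
Qed.

End iid_partial_sums.

Unset Implicit Arguments. Set Strict Implicit.

Theorem lemma10 (d : measure_display) (T : measurableType d) (R : realType)
  (P : probability T R) (X : nat -> {RV P >-> R}) (a : R) :
  iid X -> condition_P P (X 0%N) a ->
  forall eps : R, 0 < eps ->
  exists B : R, 0 < B /\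
    forall (k : nat) (u : R), (3 <= k)%N -> 0 < u ->
      tailP P (partial_sum X k) (u + a) <=
        eps * tailP P (partial_sum X k) u
        + tailP P (partial_sum X k.-1) u / tailP P (X 0%N) B.
Proof.
move=> [indX idX] cP eps eps_gt0; have [_ [tail_gt0 _]] := cP.
have e_gt0 : 0 < eps / 3 by rewrite divr_gt0.
have [B0 [B0_gt0 ratioX]] := condition_P_tail_ratio cP e_gt0.
have tailB0_gt0 := tailP_gt0 (tail_gt0 B0 B0_gt0).
have [B1 [B1_gt0 smallX]] := tail_vanishing (X 0%N) (mulr_gt0 e_gt0 tailB0_gt0).
exists (B0 + B1); split => [|[|[|k]] u //= _ _]; first lra.
have ratioV : tail_ratio_le P (fun w => X k w + X k.+1 w) eps a (B0 + B1).
  rewrite (_ : eps = 3 * (eps / 3)); last lra.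
  apply: (tail_ratio_pair indX idX k (ltW e_gt0) ratioX) => v vB.
  apply: (le_trans (smallX (v - B0) _)); first lra.
  by rewrite EFinM /tailP probability_fineK //; exact/measurable_gt_set/measurable_funP.
rewrite partial_sumSS partial_sumS -(tailP_iid idX k).
apply: (tail_add_le _ _ _ (indep_partial_sum_pair indX k) (indep_partial_sum_next indX k)
  u (ltW eps_gt0) ratioV).
- exact: measurable_partial_sum.
- exact/measurable_realfun.measurable_funD/measurable_funP/measurable_funP.
- exact: measurable_funP.
- by rewrite tailP_iid //; apply/tailP_gt0/tail_gt0; lra.
Qed.
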